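(* Consider optimal control problem OCP-1 (described in the context). The optimal control $u_*^1$ (given pointwise by maximization of the Hamiltonian along the optimal trajectory and adjoint function) is a continuous function on the interval $[0,T]$.
   Context: Parameters: $\beta_1,\beta_2,\gamma,\rho_1,\rho_2>0$; $\sigma_1,\sigma_2>0$ with $\sigma_1+\sigma_2=1$; $0\le u_{\max}<1$; weights $\alpha_1,\alpha_2\ge0$, $\alpha_3>0$; horizon $T>0$; initial values $s_0,e_0,i_0,j_0>0$ with $s_0+e_0+i_0+j_0\le 1$. The admissible controls are all Lebesgue measurable $u:[0,T]\to[0,u_{\max}]$. The state system is $s'=-s(\beta_1(1-u)^2i+\beta_2(1-u)j)$, $e'=s(\beta_1(1-u)^2i+\beta_2(1-u)j)-\gamma e$, $i'=\sigma_1\gamma e-\rho_1 i$, $j'=\sigma_2\gamma e-\rho_2 j$, with $s(0)=s_0,e(0)=e_0,i(0)=i_0,j(0)=j_0$. OCP-1 is the problem of minimizing $Q(u)=\alpha_1(e(T)+i(T)+j(T))+\alpha_2\int_0^T(e+i+j)\,dt+0.5\alpha_3\int_0^Tu^2\,dt$ over admissible controls. Its Hamiltonian is $H(s,e,i,j,\psi_1,\dots,\psi_4,u)=-s(\beta_1(1-u)^2i+\beta_2(1-u)j)(\psi_1-\psi_2)-\gamma e(\psi_2-\sigma_1\psi_3-\sigma_2\psi_4)-\rho_1 i\psi_3-\rho_2 j\psi_4-\alpha_2(e+i+j)-0.5\alpha_3u^2$. For an optimal control $u_*^1$ with optimal trajectory $(s_*^1,e_*^1,i_*^1,j_*^1)$,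 the adjoint function $\psi_*=(\psi_1^*,\dots,\psi_4^* )$ of the Pontryagin maximum principle is a nontrivial solution of $\psi_1'=(\beta_1(1-u_*^1)^2i_*^1+\beta_2(1-u_*^1)j_*^1)(\psi_1-\psi_2)$, $\psi_2'=\gamma(\psi_2-\sigma_1\psi_3-\sigma_2\psi_4)+\alpha_2$, $\psi_3'=\beta_1(1-u_*^1)^2s_*^1(\psi_1-\psi_2)+\rho_1\psi_3+\alpha_2$, $\psi_4'=\beta_2(1-u_*^1)s_*^1(\psi_1-\psi_2)+\rho_2\psi_4+\alpha_2$, with $\psi_1(T)=0$, $\psi_2(T)=\psi_3(T)=\psi_4(T)=-\alpha_1$, and $u_*^1(t)$ maximizes $H(s_*^1(t),e_*^1(t),i_*^1(t),j_*^1(t),\psi_*(t),u)$ over $u\in[0,u_{\max}]$. *)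

From mathcomp Require Import all_boot all_order all_algebra.
From mathcomp Require Import all_classical all_reals all_analysis.
Set Implicit Arguments. Unset Strict Implicit. Unset Printing Implicit Defensive.
Import Order.TTheory GRing.Theory Num.Theory.
Import numFieldNormedType.Exports.
Local Open Scope classical_set_scope.
Local Open Scope ring_scope.

(* The real line equipped with the Lebesgue (= completed, Caratheodory)
   sigma-algebra; its carrier is R itself. *)
Definition lebType (R : realType) :=
  caratheodory_type (R:=R) (@wlength R idfun)^*%mu.

Notation lmu := (@completed_lebesgue_measure _).

Record params (R : realType) := Params {
  beta1 : R; beta2 : R; gamma : R; rho1 : R; rho2 : R;
  sigma1 : R; sigma2 : R; umax : R;
  alpha1 : R; alpha2 : R; alpha3 : R;
  T : R; s0 : R; e0 : R; i0 : R; j0 : R }.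

Definition valid_params (R : realType) (p : params R) : Prop :=
  [/\ 0 < beta1 p, 0 < beta2 p, 0 < gamma p, 0 < rho1 p & 0 < rho2 p] /\
  [/\ 0 < sigma1 p, 0 < sigma2 p & sigma1 p + sigma2 p = 1] /\
  (0 <= umax p /\ umax p < 1) /\
  [/\ 0 <= alpha1 p, 0 <= alpha2 p & 0 < alpha3 p] /\
  0 < T p /\
  [/\ 0 < s0 p, 0 < e0 p, 0 < i0 p, 0 < j0 p &
      s0 p + e0 p + i0 p + j0 p <= 1].

Definition admissible (R : realType) (p : params R) (u : R -> R) : Prop :=
  measurable_fun (`[0, T p] : set (lebType R)) (u : lebType R -> R) /\
  (forall t, 0 <= t <= T p -> 0 <= u t <= umax p).

(* x is an (absolutely continuous, Caratheodory) solution of x' = F on [0,T]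
   with x(0) = x0, in integral form. *)
Definition solves_IVP (R : realType) (Tf x0 : R) (x F : R -> R) : Prop :=
  lmu.-integrable (`[0, Tf] : set (lebType R)) (EFin \o (F : lebType R -> R)) /\
  (forall t, 0 <= t <= Tf ->
     x t = x0 + Rintegral lmu (`[0, t] : set (lebType R)) (F : lebType R -> R)).

Definition solves_TVP (R : realType) (Tf xT : R) (x F : R -> R) : Prop :=
  lmu.-integrable (`[0, Tf] : set (lebType R)) (EFin \o (F : lebType R -> R)) /\
  (forall t, 0 <= t <= Tf ->
     x t = xT - Rintegral lmu (`[t, Tf] : set (lebType R)) (F : lebType R -> R)).

Definition foi (R : realType) (p : params R) (u i j : R -> R) (t : R) : R :=
  beta1 p * (1 - u t) ^+ 2 * i t + beta2 p * (1 - u t) * j t.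

Definition state_system (R : realType) (p : params R) (u s e i j : R -> R) : Prop :=
  [/\ solves_IVP (T p) (s0 p) s (fun t => - (s t * foi p u i j t)),
      solves_IVP (T p) (e0 p) e (fun t => s t * foi p u i j t - gamma p * e t),
      solves_IVP (T p) (i0 p) i (fun t => sigma1 p * gamma p * e t - rho1 p * i t) &
      solves_IVP (T p) (j0 p) j (fun t => sigma2 p * gamma p * e t - rho2 p * j t)].

Definition cost (R : realType) (p : params R) (u e i j : R -> R) : R :=
  alpha1 p * (e (T p) + i (T p) + j (T p))
  + alpha2 p * Rintegral lmu (`[0, T p] : set (lebType R))
                 ((fun t => e t + i t + j t) : lebType R -> R)
  + 2^-1 * alpha3 p * Rintegral lmu (`[0, T p] : set (lebType R))
                 ((fun t => u t ^+ 2) : lebType R -> R).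

Definition optimal (R : realType) (p : params R) (u s e i j : R -> R) : Prop :=
  [/\ admissible p u, state_system p u s e i j &
      forall v s' e' i' j', admissible p v -> state_system p v s' e' i' j' ->
        cost p u e i j <= cost p v e' i' j'].

Definition hamiltonian (R : realType) (p : params R)
    (s e i j ps1 ps2 ps3 ps4 u : R) : R :=
  - (s * (beta1 p * (1 - u) ^+ 2 * i + beta2 p * (1 - u) * j)) * (ps1 - ps2)
  - gamma p * e * (ps2 - sigma1 p * ps3 - sigma2 p * ps4)
  - rho1 p * i * ps3 - rho2 p * j * ps4
  - alpha2 p * (e + i + j) - 2^-1 * alpha3 p * u ^+ 2.

Definition adjoint_system (R : realType) (p : params R) (u s i j : R -> R)
    (ps1 ps2 ps3 ps4 : R -> R) : Prop :=
  [/\ solves_TVP (T p) 0 ps1 (fun t => foi p u i j t * (ps1 t - ps2 t)),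
      solves_TVP (T p) (- alpha1 p) ps2
        (fun t => gamma p * (ps2 t - sigma1 p * ps3 t - sigma2 p * ps4 t) + alpha2 p),
      solves_TVP (T p) (- alpha1 p) ps3
        (fun t => beta1 p * (1 - u t) ^+ 2 * s t * (ps1 t - ps2 t)
                  + rho1 p * ps3 t + alpha2 p) &
      solves_TVP (T p) (- alpha1 p) ps4
        (fun t => beta2 p * (1 - u t) * s t * (ps1 t - ps2 t)
                  + rho2 p * ps4 t + alpha2 p)].

Definition nontrivial (R : realType) (Tf : R) (ps1 ps2 ps3 ps4 : R -> R) : Prop :=
  exists t, 0 <= t <= Tf /\ (ps1 t <> 0 \/ ps2 t <> 0 \/ ps3 t <> 0 \/ ps4 t <> 0).

Definition max_condition (R : realType) (p : params R) (u s e i j : R -> R)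
    (ps1 ps2 ps3 ps4 : R -> R) : Prop :=
  forall t, 0 <= t <= T p -> forall v, 0 <= v <= umax p ->
    hamiltonian p (s t) (e t) (i t) (j t) (ps1 t) (ps2 t) (ps3 t) (ps4 t) v
    <= hamiltonian p (s t) (e t) (i t) (j t) (ps1 t) (ps2 t) (ps3 t) (ps4 t) (u t).

(* Up to terms independent of the control, the Hamiltonian is the quadratic
   -(A (1 - u)^2 + B (1 - u)) - alpha3 u^2 / 2 in u, with A = beta1 i s (psi1 - psi2)
   and B = beta2 j s (psi1 - psi2).  The states stay positive, so A and B have the
   same sign: for A >= 0 the quadratic is strictly concave and its maximiser on
   [0, umax] is its clamped vertex, for A, B <= 0 it is strictly decreasing and the
   maximiser is 0.  Either way the maximum condition pins u down as one continuous
   expression in A and B, which are continuous in t because the states and adjoints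
   are integrals of integrable functions.
   Positivity of the states is a continuity argument: while all four are positive
   each satisfies x' >= -c x for some c > 0, which keeps it away from 0 up to the
   next instant. *)

From mathcomp Require Import all_boot all_order all_algebra.
From mathcomp Require Import all_classical all_reals all_analysis.
From mathcomp Require Import ring lra.
Import Order.TTheory GRing.Theory Num.Theory.
Import numFieldNormedType.Exports.
Local Open Scope classical_set_scope.
Local Open Scope ring_scope.

Section interval_integral.
Set Implicit Arguments.
Unset Strict Implicit.
Context {R : realType}.
Local Notation L := (lebType R).

Lemma measurable_itv_leb (i : interval R) : measurable ([set` i] : set L).
Proof. apply: sub_caratheodory; exact: measurable_itv. Qed.

(* Stated at the structure [{measure _}] so that it rewrites in the goals
   produced by generic measure-theory lemmas. *)
Lemma lmu_itv_cc (a b : R) : a <= b ->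
  (lmu : {measure set L -> \bar R}) (`[a, b]%classic : set L) = (b - a)%:E.
Proof.
have itvE (i : interval R) : lmu ([set` i] : set L) =
    (if i.1 < i.2 then (i.2 : \bar R) - i.1 else 0)%E.
  exact: lebesgue_measure_itv.
move=> ab; have ccE : lmu (`[a, b]%classic : set L) = (b - a)%:E.
  by rewrite itvE /= lte_fin; case: ltgtP ab => //= -> _; rewrite subrr.
exact: ccE.
Qed.

Definition itv_integral (a b : R) (F : R -> R) : R :=
  Rintegral lmu (`[a, b] : set L) (F : L -> R).

Definition itv_integrable (a b : R) (F : R -> R) : Prop :=
  lmu.-integrable (`[a, b] : set L) (EFin \o (F : L -> R)).

Lemma itv_integrableS a b c d F : a <= c -> d <= b ->
  itv_integrable a b F -> itv_integrable c d F.
Proof.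
move=> ac db; apply: integrableS; [exact: measurable_itv_leb.. |].
by apply: subset_itv; rewrite bnd_simp.
Qed.

Lemma itv_integrable_cst a b k : a <= b -> itv_integrable a b (fun=> k).
Proof.
move=> ab; apply: measurable_bounded_integrable.
- exact: measurable_itv_leb.
- by rewrite lmu_itv_cc // ltry.
- exact: measurable_cst.
- by exists `|k|; split => // M kM z _ /=; lra.
Qed.

Lemma itv_integral_cst a b k : a <= b -> itv_integral a b (fun=> k) = k * (b - a).
Proof.
move=> ab; rewrite /itv_integral Rintegral_cst ?lmu_itv_cc //.
exact: measurable_itv_leb.
Qed.

Lemma itv_integral_point r F : itv_integrable r r F -> itv_integral r r F = 0.
Proof.
move=> iF; rewrite /itv_integral /Rintegral null_set_integral //.
- exact: measurable_itv_leb.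
- by case/integrableP: iF.
- by rewrite lmu_itv_cc // subrr.
Qed.

Lemma itv_integral_split a r b F : a <= r <= b -> itv_integrable a b F ->
  itv_integral a b F = itv_integral a r F + itv_integral r b F.
Proof.
have co_cc c d : c <= r <= d -> itv_integrable c d F -> itv_integral c d F =
    Rintegral lmu (`[c, r[ : set L) (F : L -> R) + itv_integral r d F.
  move=> /andP[cr rd] iF; rewrite /itv_integral.
  rewrite (@itv_bndbnd_setU _ _ (BLeft c) (BLeft r) (BRight d)) ?bnd_simp //.
  rewrite Rintegral_setU //; try exact: measurable_itv_leb.
  - by rewrite -itv_bndbnd_setU ?bnd_simp.
  - apply/disj_set2P; rewrite -subset0 => z /=; rewrite !in_itv /=.
    by case=> /andP[_ zr] /andP[rz _]; lra.
move=> /andP[ar rb] iF; have iar : itv_integrable a r F by exact: itv_integrableS iF.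
rewrite (co_cc a b) ?ar ?rb // (co_cc a r) ?ar ?lexx //.
by rewrite itv_integral_point ?addr0 //; exact: itv_integrableS iar.
Qed.

Lemma ler_itv_integral_cst a b k F : a <= b -> itv_integrable a b F ->
  (forall t, a <= t <= b -> k <= F t) -> k * (b - a) <= itv_integral a b F.
Proof.
move=> ab iF kF; rewrite -itv_integral_cst //; apply: le_Rintegral => //.
- exact: measurable_itv_leb.
- exact: itv_integrable_cst.
Qed.

Lemma itv_integral_small T F e : itv_integrable 0 T F -> 0 < e ->
  exists2 d, 0 < d & forall a b, 0 <= a -> a <= b -> b <= T -> b - a < d ->
    `|itv_integral a b F| < e.
Proof.
move=> iF e0.
have iT : lmu.-integrable setT (EFin \o ((F : L -> R) \_ (`[0, T] : set L))).
  rewrite -restrict_EFin; apply/integrable_restrict => //=.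
    exact: measurable_itv_leb.
  by rewrite setTI.
have [d [d0 small]] := integral_normr_continuous iT e0.
exists d => // a b a0 ab bT bad.
apply: le_lt_trans (le_normr_Rintegral _ _) _; first exact: measurable_itv_leb.
  exact: itv_integrableS iF.
have := small (`[a, b]%classic : set L) (measurable_itv_leb _).
rewrite lmu_itv_cc // lte_fin => /(_ bad); apply: le_lt_trans.
rewrite le_eqVlt; apply/orP; left; apply/eqP/eq_Rintegral => z.
rewrite inE /= in_itv /= => /andP[az zb].
by rewrite patchE ifT // inE /= in_itv /=; apply/andP; split; lra.
Qed.

Definition clamp (T t : R) : R := Order.min (Order.max 0 t) T.

Lemma clamp_itv T t : 0 <= T -> 0 <= clamp T t <= T.
Proof.
rewrite /clamp => T0; apply/andP; split; last by rewrite ge_min lexx orbT.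
by rewrite le_min T0 le_max lexx.
Qed.

Lemma clamp_id T t : 0 <= t <= T -> clamp T t = t.
Proof. by case/andP=> t0 tT; rewrite /clamp max_r // min_l. Qed.

Lemma clamp_dist T t y : 0 <= T -> `|clamp T t - clamp T y| <= `|t - y|.
Proof.
move=> T0; rewrite /clamp ler_norml.
have := ler_norm (t - y); have := ler_norm (y - t); rewrite distrC.
by case: (leP 0 t); case: (leP 0 y); case: (leP t T); case: (leP y T);
  rewrite ?max_r ?max_l ?min_l ?min_r //; lra.
Qed.

(* [t |-> x0 + \int_0^t F], extended as a constant outside [[0, T]] so that the
   global continuity lemmas of the library apply. *)
Definition primitive_ext (T x0 : R) (F : R -> R) (t : R) : R :=
  x0 + itv_integral 0 (clamp T t) F.

Lemma continuous_primitive_ext T x0 F : 0 <= T -> itv_integrable 0 T F ->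
  continuous (primitive_ext T x0 F).
Proof.
move=> T0 iF t.
apply: (@continuousD _ _ _ (fun=> x0) _ t (@cst_continuous _ _ _ t)).
apply/cvgrPdist_lt => e e0; have [d d0 small] := itv_integral_small iF e0.
exists d => //= y; rewrite /ball /= => tyd.
have := clamp_dist t y T0; have := clamp_itv t T0; have := clamp_itv y T0.
move: (clamp T t) (clamp T y) => a b /andP[b0 bT] /andP[a0 aT] abd.
have [ab|ba] := leP a b.
- rewrite (@itv_integral_split 0 a b) ?a0 //; last exact: itv_integrableS iF.
  rewrite opprD addNKr normrN; apply: small => //.
  by have := ler_norm (b - a); rewrite distrC; lra.
- rewrite (@itv_integral_split 0 b a) ?b0 ?(ltW ba) //; last exact: itv_integrableS iF.
  rewrite addrAC subrr add0r; apply: small => //; first exact: ltW.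
  by have := ler_norm (a - b); lra.
Qed.

Lemma primitive_ext_increment T x0 F r t : itv_integrable 0 T F ->
  0 <= r -> r <= t -> t <= T ->
  primitive_ext T x0 F t = primitive_ext T x0 F r + itv_integral r t F.
Proof.
move=> iF r0 rt tT; rewrite /primitive_ext !clamp_id; try (apply/andP; split; lra).
by rewrite (@itv_integral_split 0 r t) ?r0 ?addrA //; exact: itv_integrableS iF.
Qed.

Lemma solves_IVP_primitive_ext T x0 x F : solves_IVP T x0 x F ->
  forall t, 0 <= t <= T -> x t = primitive_ext T x0 F t.
Proof. by case=> _ xE t tT; rewrite /primitive_ext clamp_id // xE. Qed.

Lemma solves_TVP_primitive_ext T xT x F : solves_TVP T xT x F ->
  forall t, 0 <= t <= T -> x t = primitive_ext T (xT - itv_integral 0 T F) F t.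
Proof.
case=> iF xE t tT; rewrite /primitive_ext clamp_id // xE //.
by rewrite (@itv_integral_split 0 t T) // /itv_integral; ring.
Qed.

Lemma primitive_ext0 T x0 F : 0 <= T -> itv_integrable 0 T F ->
  primitive_ext T x0 F 0 = x0.
Proof.
move=> T0 iF; rewrite /primitive_ext clamp_id ?lexx // itv_integral_point ?addr0 //.
exact: itv_integrableS iF.
Qed.

Lemma solves_IVP_continuous_ext T x0 x F : 0 <= T -> solves_IVP T x0 x F ->
  exists2 X : R -> R, continuous X & forall t, 0 <= t <= T -> x t = X t.
Proof.
move=> T0 hx; exists (primitive_ext T x0 F); last exact: solves_IVP_primitive_ext hx.
exact: continuous_primitive_ext hx.1.
Qed.

Lemma solves_TVP_continuous_ext T xT x F : 0 <= T -> solves_TVP T xT x F ->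
  exists2 X : R -> R, continuous X & forall t, 0 <= t <= T -> x t = X t.
Proof.
move=> T0 hx; exists (primitive_ext T (xT - itv_integral 0 T F) F).
  exact: continuous_primitive_ext hx.1.
exact: solves_TVP_primitive_ext hx.
Qed.

End interval_integral.

Section positivity.
Context {R : realType}.
Set Implicit Arguments.
Unset Strict Implicit.

Lemma ge0_cc_of_gt0_co (g : R -> R) t1 : continuous g -> 0 < t1 ->
  (forall t, 0 <= t < t1 -> 0 < g t) -> forall t, 0 <= t <= t1 -> 0 <= g t.
Proof.
move=> gc t10 gpos t /andP[t0 tt1]; have [tlt|t1t] := ltP t t1.
  by apply/ltW/gpos; rewrite t0.
have -> : t = t1 by lra.
apply: (@closed_cvg _ _ t1^'- _ g _ (@closed_ge R 0)) (cvg_at_left_filter (gc t1)).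
near=> x; apply/ltW/gpos; apply/andP; split.
- by near: x; exact: nbhs_left_ge.
- by near: x; exact: nbhs_left_lt.
Unshelve. all: by end_near.
Qed.

Lemma continuous_induction_gt0 (g : R -> R) T : continuous g ->
  (forall t1, 0 <= t1 <= T -> (forall t, 0 <= t < t1 -> 0 < g t) -> 0 < g t1) ->
  forall t, 0 <= t <= T -> 0 < g t.
Proof.
move=> gc step t /andP[t0 tT]; rewrite ltNge; apply/negP => gt_le0.
pose A := [set r | forall x, 0 <= x <= r -> 0 < g x].
have A0 : A 0.
  move=> x x0; have -> : x = 0 by lra.
  by apply: step => [|y]; lra.
have At : ubound A t.
  move=> r Ar; rewrite leNgt; apply/negP => tr.
  by have := Ar t; lra.
have supA : has_sup A by split; [exists 0 | exists t].
have m0 : 0 <= sup A := sup_upper_bound supA A0.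
have mt : sup A <= t by apply: ge_sup => //; exists 0.
have below x : 0 <= x < sup A -> 0 < g x.
  case/andP=> x0 xm; have [r Ar xr] := sup_adherent (eps := sup A - x) ltac:(lra) supA.
  by apply: Ar; lra.
have gm : 0 < g (sup A) by apply: step => //; lra.
have [d /= d0 gpos] := (nbhs_ballP _ _).1 (cvgr_gt _ (gc (sup A)) 0 gm).
have : A (sup A + d / 2).
  move=> x /andP[x0 xmd]; have [xm|mx] := ltP x (sup A); first by apply: below; lra.
  by apply: gpos; rewrite /ball /= ler0_norm; lra.
by move/(sup_upper_bound supA); lra.
Qed.

Lemma primitive_ext_gt0 (T x0 : R) (F : R -> R) (c t1 : R) :
  itv_integrable 0 T F -> 0 < c -> 0 < t1 -> t1 <= T ->
  (forall t, 0 <= t < t1 -> 0 < primitive_ext T x0 F t) ->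
  (forall t, 0 <= t <= t1 -> - c * primitive_ext T x0 F t <= F t) ->
  0 < primitive_ext T x0 F t1.
Proof.
move=> iF c0 t10 t1T Xpos Fge; set X := primitive_ext T x0 F in Xpos Fge *.
(* If c (t1 - tau) <= 1/2 and r maximises X on [[tau, t1]], then
   X t1 >= X r - c X r (t1 - r) >= X r / 2 >= X tau / 2 > 0. *)
have [tau [tau0 taut1 ctau]] :
    exists tau, [/\ 0 <= tau, tau < t1 & c * (t1 - tau) <= 2^-1].
  have ck : c * (2 * c)^-1 = 2^-1 by field; lra.
  have [tk|kt] := lerP t1 (2 * c)^-1.
    by exists 0; split => //; rewrite subr0 -ck ler_pM2l.
  exists (t1 - (2 * c)^-1); split; [lra | | by rewrite subKr ck].
  by rewrite gtrBl invr_gt0; lra.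
have Xc : continuous X by apply: continuous_primitive_ext; [lra | exact: iF].
have [r] := EVT_max (ltW taut1) (continuous_subspaceT Xc).
rewrite in_itv /= => /andP[taur rt1] Xmax.
have Xr : 0 < X r.
  apply: lt_le_trans (Xmax tau _); last by rewrite in_itv /= lexx ltW.
  by apply: Xpos; lra.
have : - c * X r * (t1 - r) <= itv_integral r t1 F.
  apply: ler_itv_integral_cst => //; first by apply: itv_integrableS iF; lra.
  move=> t rt; apply: le_trans (Fge t _); last lra.
  by rewrite !mulNr lerN2 ler_pM2l // Xmax // in_itv /=; lra.
have cr : c * (t1 - r) <= 2^-1 by nra.
rewrite /X (@primitive_ext_increment R T x0 F r t1) -/X //; nra.
Qed.

End positivity.

Section control_law.
Variable R : realFieldType.
Implicit Types A B a um v w x y m : R.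

Definition control_part A B a v : R :=
  - (A * (1 - v) ^+ 2 + B * (1 - v)) - 2^-1 * a * v ^+ 2.

(* For [A >= 0] the vertex of the concave parabola [control_part A B a],
   clamped to [[0, um]]; for [A, B <= 0] the clamped value [0]. *)
Definition control_law um a A B : R :=
  Num.min um (Num.max 0 ((2 * A + B) / (2 * Num.max A 0 + a))).

Lemma control_partB A B a v w :
  control_part A B a v - control_part A B a w =
  (v - w) * ((2 * A + B) - (2 * A + a) * 2^-1 * (v + w)).
Proof. by rewrite /control_part; field. Qed.

Lemma control_part_lt_law_ge0 um a A B v : 0 < a -> 0 <= um ->
  0 <= A -> 0 <= B -> 0 <= v <= um -> v != control_law um a A B ->
  control_part A B a v < control_part A B a (control_law um a A B).
Proof.
move=> a0 um0 A0 B0 /andP[v0 vum]; rewrite /control_law (max_l A0).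
have D0 : 0 < 2 * A + a by lra.
set q := (2 * A + B) / (2 * A + a).
have qE : 2 * A + B = q * (2 * A + a) by rewrite /q divfK // lt0r_neq0.
have q0 : 0 <= q by apply: divr_ge0; lra.
rewrite (max_r q0) -subr_lt0 control_partB qE.
have [qum|umq] := lerP q um.
  move=> vq; have : 0 < (v - q) ^+ 2 by rewrite exprn_even_gt0 // subr_eq0.
  by nra.
move=> v_neq_um; have v_lt_um : v < um by rewrite lt_neqAle v_neq_um vum.
have : 0 < (um - v) * (q - (v + um) / 2) by apply: mulr_gt0; lra.
by nra.
Qed.

Lemma control_part_lt_law_le0 um a A B v : 0 < a -> um < 1 ->
  A <= 0 -> B <= 0 -> 0 <= v <= um -> v != control_law um a A B ->
  control_part A B a v < control_part A B a (control_law um a A B).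
Proof.
move=> a0 um1 A0 B0 /andP[v0 vum].
have q0 : (2 * A + B) / a <= 0 by rewrite ler_pdivrMr // mul0r; lra.
rewrite /control_law (max_r A0) mulr0 add0r (max_l q0) min_r; last lra.
rewrite -subr_lt0 control_partB => v0'.
have vp : 0 < v by rewrite lt_neqAle eq_sym v0' v0.
have : v * (A * (2 - v) + B) <= 0 by apply: mulr_ge0_le0; nra.
have : 0 < a * v ^+ 2 by apply: mulr_gt0; last exact: exprn_gt0.
by nra.
Qed.

Lemma control_law_unique_max um a x y m u0 : 0 < a -> 0 <= um < 1 ->
  0 <= x -> 0 <= y -> 0 <= u0 <= um ->
  (forall v, 0 <= v <= um ->
     control_part (x * m) (y * m) a v <= control_part (x * m) (y * m) a u0) ->
  u0 = control_law um a (x * m) (y * m).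
Proof.
move=> a0 /andP[um0 um1] x0 y0 u0um u0max; apply/eqP/negPn/negP => u0law.
have lawum : 0 <= control_law um a (x * m) (y * m) <= um.
  rewrite /control_law; apply/andP; split; last by rewrite ge_min lexx.
  by rewrite le_min um0 le_max lexx.
have := u0max _ lawum; rewrite leNgt => /negP; apply.
have [m0|m0] := leP 0 m.
- by apply: control_part_lt_law_ge0 => //; exact: mulr_ge0.
- by apply: control_part_lt_law_le0 => //; apply: mulr_ge0_le0 => //; exact: ltW.
Qed.

End control_law.

Section feedback.
Variable R : realType.

Lemma continuous_control_law um a (A B : R -> R) :
  0 < a -> continuous A -> continuous B ->
  continuous (fun t => control_law um a (A t) (B t)).
Proof.
move=> a0 cA cB t.
have cst (k : R) : {for t, continuous (fun=> k)} by exact: cst_continuous.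
have cAp : {for t, continuous (fun x => Num.max (A x) 0)} :=
  continuous_max (cA t) (cst 0).
have den_neq0 : 2 * Num.max (A t) 0 + a != 0.
  by rewrite lt0r_neq0 // ltr_wpDl // mulr_ge0 // le_max lexx orbT.
have cnum : {for t, continuous (fun x => 2 * A x + B x)} :=
  continuousD (continuousM (cst 2) (cA t)) (cB t).
have cden : {for t, continuous (fun x => 2 * Num.max (A x) 0 + a)} :=
  continuousD (continuousM (cst 2) cAp) (cst a).
have cq : {for t, continuous (fun x => (2 * A x + B x) / (2 * Num.max (A x) 0 + a))} :=
  continuousM cnum (@continuousV _ _ (fun x => 2 * Num.max (A x) 0 + a) t den_neq0 cden).
exact: continuous_min (cst um) (continuous_max (cst 0) cq).
Qed.

Definition feedback_control (p : params R) (s i j p1 p2 : R) : R :=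
  control_law (umax p) (alpha3 p)
    (beta1 p * i * (s * (p1 - p2))) (beta2 p * j * (s * (p1 - p2))).

Lemma hamiltonianB (p : params R) (s e i j p1 p2 p3 p4 v w : R) :
  let A := beta1 p * i * (s * (p1 - p2)) in let B := beta2 p * j * (s * (p1 - p2)) in
  hamiltonian p s e i j p1 p2 p3 p4 v - hamiltonian p s e i j p1 p2 p3 p4 w =
  control_part A B (alpha3 p) v - control_part A B (alpha3 p) w.
Proof. by rewrite /hamiltonian /control_part; ring. Qed.

Lemma hamiltonian_argmax (p : params R) (s e i j p1 p2 p3 p4 u0 : R) :
  valid_params p -> 0 <= i -> 0 <= j -> 0 <= u0 <= umax p ->
  (forall v, 0 <= v <= umax p -> hamiltonian p s e i j p1 p2 p3 p4 v <=
                               hamiltonian p s e i j p1 p2 p3 p4 u0) ->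
  u0 = feedback_control p s i j p1 p2.
Proof.
move=> [[b1 b2 _ _ _] [_ [[um0 um1] [[_ _ a3] _]]]] i0 j0 u0um hmax.
rewrite /feedback_control; apply: control_law_unique_max => //.
- by rewrite um0 um1.
- exact: mulr_ge0 (ltW b1) i0.
- exact: mulr_ge0 (ltW b2) j0.
- move=> v vum; rewrite -subr_ge0 -(hamiltonianB p s e i j p1 p2 p3 p4) subr_ge0.
  exact: hmax.
Qed.

Lemma continuous_feedback_control (p : params R) (S I J P1 P2 : R -> R) :
  0 < alpha3 p -> continuous S -> continuous I -> continuous J ->
  continuous P1 -> continuous P2 ->
  continuous (fun t => feedback_control p (S t) (I t) (J t) (P1 t) (P2 t)).
Proof.
move=> a0 cS cI cJ cP1 cP2.
have cA c (X : R -> R) : continuous X ->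
    continuous (fun t => c * X t * (S t * (P1 t - P2 t))).
  move=> cX t; have cc : {for t, continuous (fun=> c)} by exact: cst_continuous.
  exact: continuousM (continuousM cc (cX t))
    (continuousM (cS t) (continuousD (cP1 t) (continuousN (cP2 t)))).
exact: continuous_control_law a0 (cA _ _ cI) (cA _ _ cJ).
Qed.

End feedback.

Lemma infection_rate_bounds (R : realFieldType) (b1 b2 v x y Mx My : R) :
  0 <= b1 -> 0 <= b2 -> 0 <= v <= 1 -> 0 <= x <= Mx -> 0 <= y <= My ->
  0 <= b1 * (1 - v) ^+ 2 * x + b2 * (1 - v) * y <= b1 * Mx + b2 * My.
Proof.
move=> b10 b20 /andP[v0 v1] /andP[x0 xM] /andP[y0 yM].
have w0 : 0 <= 1 - v by lra.
have w1 : 1 - v <= 1 by lra.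
have wx : (1 - v) ^+ 2 * x <= Mx.
  by apply: le_trans xM; rewrite ler_piMl // ?sqr_ge0 // expr_le1.
have wy : (1 - v) * y <= My by apply: le_trans yM; rewrite ler_piMl.
have : 0 <= (1 - v) ^+ 2 * x by rewrite mulr_ge0 ?sqr_ge0.
have : 0 <= (1 - v) * y by rewrite mulr_ge0.
by rewrite -!mulrA; nra.
Qed.

Section state_positivity.
Variables (R : realType) (p : params R) (u s e i j : R -> R).
Hypotheses (hp : valid_params p) (hu : admissible p u)
  (hsys : state_system p u s e i j).

Local Notation S := (primitive_ext (T p) (s0 p) (fun t => - (s t * foi p u i j t))).
Local Notation E :=
  (primitive_ext (T p) (e0 p) (fun t => s t * foi p u i j t - gamma p * e t)).
Local Notation I :=
  (primitive_ext (T p) (i0 p) (fun t => sigma1 p * gamma p * e t - rho1 p * i t)).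
Local Notation J :=
  (primitive_ext (T p) (j0 p) (fun t => sigma2 p * gamma p * e t - rho2 p * j t)).

Let T_ge0 : 0 <= T p.
Proof. by case: hp => _ [_ [_ [_ [/ltW]]]]. Qed.

Lemma foi_bounded : exists2 M, 0 <= M &
  forall t, 0 <= t <= T p -> 0 <= i t -> 0 <= j t -> 0 <= foi p u i j t <= M.
Proof.
have [[b1 b2 _ _ _] [_ [[_ um1] _]]] := hp.
have [_ _ hI hJ] := hsys.
have cI : continuous I := continuous_primitive_ext T_ge0 hI.1.
have cJ : continuous J := continuous_primitive_ext T_ge0 hJ.1.
have [ci _ Imax] := EVT_max T_ge0 (continuous_subspaceT cI).
have [cj _ Jmax] := EVT_max T_ge0 (continuous_subspaceT cJ).
exists (beta1 p * `|I ci| + beta2 p * `|J cj|).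
  by rewrite addr_ge0 // mulr_ge0 // ltW.
move=> t tT it jt; have [u0 uum] := andP (hu.2 t tT).
apply: infection_rate_bounds; try exact: ltW.
- by rewrite u0 /=; lra.
- rewrite it (solves_IVP_primitive_ext hI tT) /=.
  by rewrite (le_trans _ (ler_norm _)) // Imax // in_itv.
- rewrite jt (solves_IVP_primitive_ext hJ tT) /=.
  by rewrite (le_trans _ (ler_norm _)) // Jmax // in_itv.
Qed.

Lemma state_ext_gt0_step t1 : 0 < t1 -> t1 <= T p ->
  (forall t, 0 <= t < t1 -> [/\ 0 < S t, 0 < E t, 0 < I t & 0 < J t]) ->
  [/\ 0 < S t1, 0 < E t1, 0 < I t1 & 0 < J t1].
Proof.
have [[_ _ g r1 r2] [[sg1 sg2 _] _]] := hp.
have [hS hE hI hJ] := hsys.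
move=> t10 t1T pos.
have inT t : 0 <= t <= t1 -> 0 <= t <= T p by move=> /andP[t0 tt1]; rewrite t0 /=; lra.
have eS := solves_IVP_primitive_ext hS; have eE := solves_IVP_primitive_ext hE.
have eI := solves_IVP_primitive_ext hI; have eJ := solves_IVP_primitive_ext hJ.
have ge0 x0 F : itv_integrable 0 (T p) F ->
    (forall t, 0 <= t < t1 -> 0 < primitive_ext (T p) x0 F t) ->
    forall t, 0 <= t <= t1 -> 0 <= primitive_ext (T p) x0 F t.
  by move=> iF; apply: ge0_cc_of_gt0_co => //; exact: continuous_primitive_ext.
have [Sgt0 Egt0 Igt0 Jgt0] : [/\ forall t, 0 <= t < t1 -> 0 < S t,
    forall t, 0 <= t < t1 -> 0 < E t, forall t, 0 <= t < t1 -> 0 < I t &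
    forall t, 0 <= t < t1 -> 0 < J t] by split=> t /pos[].
have Sge0 := ge0 _ _ hS.1 Sgt0; have Ege0 := ge0 _ _ hE.1 Egt0.
have Ige0 := ge0 _ _ hI.1 Igt0; have Jge0 := ge0 _ _ hJ.1 Jgt0.
have [M M0 foiM] := foi_bounded.
have foiM' t : 0 <= t <= t1 -> 0 <= foi p u i j t <= M.
  move=> tt1; apply: foiM; rewrite ?eI ?eJ ?inT //; [exact: Ige0 | exact: Jge0].
split.
- apply: (primitive_ext_gt0 (c := M + 1) hS.1) => //; first lra.
  move=> t tt1 /=; rewrite eS ?inT //.
  by have := foiM' t tt1; have := Sge0 t tt1; nra.
- apply: (primitive_ext_gt0 (c := gamma p) hE.1) => // t tt1 /=.
  rewrite eS ?inT // eE ?inT //.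
  by have := foiM' t tt1; have := Sge0 t tt1; nra.
- apply: (primitive_ext_gt0 (c := rho1 p) hI.1) => // t tt1 /=.
  rewrite eE ?inT // eI ?inT //.
  by have := Ege0 t tt1; have := mulr_gt0 sg1 g; nra.
- apply: (primitive_ext_gt0 (c := rho2 p) hJ.1) => // t tt1 /=.
  rewrite eE ?inT // eJ ?inT //.
  by have := Ege0 t tt1; have := mulr_gt0 sg2 g; nra.
Qed.

Lemma state_gt0 x : 0 <= x <= T p -> [/\ 0 < s x, 0 < e x, 0 < i x & 0 < j x].
Proof.
have [_ [_ [_ [_ [_ [hs0 he0 hi0 hj0 _]]]]]] := hp.
have [hS hE hI hJ] := hsys.
pose g t := Num.min (Num.min (S t) (E t)) (Num.min (I t) (J t)).
have gE t : 0 < g t <-> [/\ 0 < S t, 0 < E t, 0 < I t & 0 < J t].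
  rewrite /g !lt_min.
  by split=> [/andP[/andP[-> ->] /andP[-> ->]] | [-> -> -> ->]].
have cg : continuous g.
  move=> y; have cX := continuous_primitive_ext T_ge0.
  exact: continuous_min (continuous_min (cX _ _ hS.1 y) (cX _ _ hE.1 y))
                        (continuous_min (cX _ _ hI.1 y) (cX _ _ hJ.1 y)).
have gpos : forall t, 0 <= t <= T p -> 0 < g t.
  apply: continuous_induction_gt0 cg _ => t1 /andP[t10 t1T] gpos; apply/gE.
  have [t1_gt0|t1_le0] := ltP 0 t1.
    by apply: state_ext_gt0_step => // y /gpos /gE.
  have -> : t1 = 0 by lra.
  rewrite (primitive_ext0 _ T_ge0 hS.1) (primitive_ext0 _ T_ge0 hE.1).
  by rewrite (primitive_ext0 _ T_ge0 hI.1) (primitive_ext0 _ T_ge0 hJ.1).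
move=> xT; rewrite (solves_IVP_primitive_ext hS xT) (solves_IVP_primitive_ext hE xT).
rewrite (solves_IVP_primitive_ext hI xT) (solves_IVP_primitive_ext hJ xT).
exact/gE/gpos.
Qed.

End state_positivity.

Theorem lemma5 (R : realType) (p : params R)
    (u s e i j ps1 ps2 ps3 ps4 : R -> R) :
  valid_params p ->
  optimal p u s e i j ->
  adjoint_system p u s i j ps1 ps2 ps3 ps4 ->
  nontrivial (T p) ps1 ps2 ps3 ps4 ->
  max_condition p u s e i j ps1 ps2 ps3 ps4 ->
  {within `[0, T p], continuous u}.
Proof.
move=> hp [hu hsys _] [hP1 hP2 _ _] _ hmax.
have T0 : 0 <= T p by case: hp => _ [_ [_ [_ [/ltW]]]].
have [hS _ hI hJ] := hsys.
have [S cS eS] := solves_IVP_continuous_ext T0 hS.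
have [I cI eI] := solves_IVP_continuous_ext T0 hI.
have [J cJ eJ] := solves_IVP_continuous_ext T0 hJ.
have [P1 cP1 eP1] := solves_TVP_continuous_ext T0 hP1.
have [P2 cP2 eP2] := solves_TVP_continuous_ext T0 hP2.
apply: (@subspace_eq_continuous _ _ _
  (fun t => feedback_control p (S t) (I t) (J t) (P1 t) (P2 t))).
  move=> t; rewrite inE /= in_itv /= => tT.
  have [_ _ it jt] := state_gt0 hp hu hsys tT.
  rewrite -eS // -eI // -eJ // -eP1 // -eP2 //.
  apply/esym/hamiltonian_argmax => //.
  - exact: ltW.
  - exact: ltW.
  - exact: hu.2.
  - exact: hmax.
apply: continuous_subspaceT; apply: continuous_feedback_control => //.
by case: hp => _ [_ [_ [[_ _ a3] _]]].
Qed.
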